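(* Let $T\in(0,\infty]$ and let $K(T),M(T)\in\Im_T$. If $M(T)\approx K(T)$, then for every Banach function space $\widetilde{X}(0,T)$, $$K(T)\mapsto\widetilde{X}(0,T)\iff M(T)\mapsto\widetilde{X}(0,T).$$
   Context: $\Im_T$ is the collection of cones $K(T)$ of nonnegative measurable functions on $(0,T)$ equipped with functionals $\rho_{K(T)}:K(T)\to[0,\infty)$ such that $h\in K(T),\alpha\ge0$ implies $\alpha h\in K(T)$ and $\rho_{K(T)}(\alpha h)=\alpha\rho_{K(T)}(h)$, and $\rho_{K(T)}(h)=0$ implies $h=0$ a.e. on $(0,T)$. Covering: $M(T)\prec K(T)$ if there exist $C_0=C_0(T)>0$ and $C_1=C_1(T)\in[0,\infty)$ with $C_1(\infty)=0$ such that for each $h_1\in M(T)$ there is $h_2\in K(T)$ with $\rho_{K(T)}(h_2)\le C_0\rho_{M(T)}(h_1)$ and $h_1(t)\le h_2(t)+C_1\rho_{M(T)}(h_1)$ for $t\in(0,T)$. $M(T)\approx K(T)$ means $M(T)\prec K(T)$ and $K(T)\prec M(T)$. Embedding: $M(T)\mapsto\widetilde{X}(0,T)$ means $M(T)\subset\widetilde{X}(0,T)$ and there is a constant $C>0$ with $\|h\|_{\widetilde{X}(0,T)}\le C\rho_{M(T)}(h)$ for all $h\in M(T)$. *)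

From HB Require Import structures.
From mathcomp Require Import all_boot all_order all_algebra.
From mathcomp Require Import all_classical all_reals all_analysis measurable_realfun.
Set Implicit Arguments. Unset Strict Implicit. Unset Printing Implicit Defensive.
Import Order.TTheory GRing.Theory Num.Theory.
Import numFieldNormedType.Exports.
Local Open Scope classical_set_scope.
Local Open Scope ring_scope.

Section Defs.
Variable R : realType.
Local Notation mu := (@lebesgue_measure R).

(* The open interval (0,T), T in (0, +oo]. Functions "on (0,T)" are modelled as
   extended-real valued functions on R, of which only the values on (0,T) matter. *)
Definition itv0T (T : \bar R) : set R := [set x | 0 < x /\ (x%:E < T)%E].

Definition nnmeas (T : \bar R) (f : R -> \bar R) : Prop :=
  measurable_fun (itv0T T) f /\ (forall x, itv0T T x -> (0 <= f x)%E).

Definition in_ImT (T : \bar R) (K : set (R -> \bar R)) (rho : (R -> \bar R) -> R)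
  : Prop :=
  [/\ (forall h, K h -> nnmeas T h),
      (forall h, K h -> 0 <= rho h),
      (forall h (a : R), K h -> 0 <= a ->
          K (fun x => (a%:E * h x)%E) /\ rho (fun x => (a%:E * h x)%E) = a * rho h)
    & (forall h, K h -> rho h = 0 ->
          mu.-negligible [set x | itv0T T x /\ h x <> 0%E])].

Definition covered (T : \bar R)
  (M : set (R -> \bar R)) (rhoM : (R -> \bar R) -> R)
  (K : set (R -> \bar R)) (rhoK : (R -> \bar R) -> R) : Prop :=
  exists C0 C1 : R, [/\ 0 < C0, 0 <= C1, (T = +oo%E -> C1 = 0) &
    forall h1, M h1 -> exists h2, [/\ K h2, rhoK h2 <= C0 * rhoM h1 &
      forall x, itv0T T x -> (h1 x <= h2 x + (C1 * rhoM h1)%:E)%E]].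

Definition equiv_cone (T : \bar R)
  (M : set (R -> \bar R)) (rhoM : (R -> \bar R) -> R)
  (K : set (R -> \bar R)) (rhoK : (R -> \bar R) -> R) : Prop :=
  covered T M rhoM K rhoK /\ covered T K rhoK M rhoM.

(* Banach function norm on (0,T) (Bennett--Sharpley axioms (P1)-(P5)),
   acting on nonnegative measurable functions on (0,T). *)
Definition BF_norm (T : \bar R) (rho : (R -> \bar R) -> \bar R) : Prop :=
  let D := itv0T T in
  let nn f := measurable_fun D f /\ (forall x, (0 <= f x)%E) in
  (forall f, nn f -> (0 <= rho f)%E) /\
  (forall f, nn f -> (rho f = 0%E <-> mu.-negligible [set x | D x /\ f x <> 0%E])) /\
  (forall f (a : R), nn f -> 0 <= a -> rho (fun x => (a%:E * f x)%E) = (a%:E * rho f)%E) /\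
  (forall f g, nn f -> nn g -> (rho (fun x => f x + g x) <= rho f + rho g)%E) /\
  (forall f g, nn f -> nn g ->
     mu.-negligible [set x | D x /\ ~ (g x <= f x)%E] -> (rho g <= rho f)%E) /\
  (forall (fs : nat -> R -> \bar R) f, (forall n, nn (fs n)) -> nn f ->
     mu.-negligible [set x | D x /\
        ~ ((forall n, (fs n x <= fs n.+1 x)%E) /\ (fun n => fs n x) @ \oo --> f x)] ->
     (fun n => rho (fs n)) @ \oo --> rho f) /\
  (forall E, measurable E -> E `<=` D -> (mu E < +oo)%E ->
     (rho (fun x => (\1_E x)%:E) < +oo)%E) /\
  (forall E, measurable E -> E `<=` D -> (mu E < +oo)%E ->
     exists CE : R, 0 < CE /\
       forall f, nn f -> (\int[mu]_(x in E) f x <= CE%:E * rho f)%E).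

(* The embedding M(T) \mapsto \tilde X(0,T), where \tilde X(0,T) is the Banach
   function space {f measurable on (0,T) : rhoX |f| < oo} with norm rhoX |f|. *)
Definition embeds (T : \bar R) (M : set (R -> \bar R)) (rhoM : (R -> \bar R) -> R)
  (rhoX : (R -> \bar R) -> \bar R) : Prop :=
  (forall h, M h -> measurable_fun (itv0T T) h /\ (rhoX (fun x => `|h x|%E) < +oo)%E) /\
  exists C : R, 0 < C /\
    forall h, M h -> (rhoX (fun x => `|h x|%E) <= (C * rhoM h)%:E)%E.

End Defs.

(* Let h1 in M be covered by h2 in K: h1 <= h2 + C1 rhoM(h1) on (0,T) and
   rhoK(h2) <= C0 rhoM(h1).  The lattice property, subadditivity and
   homogeneity of the Banach function norm give
   rhoX(|h1|) <= rhoX(|h2|) + C1 rhoM(h1) rhoX(1_(0,T)).  When T is finite,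
   (P4) makes rhoX(1_(0,T)) finite, and when T = oo the constant C1 vanishes;
   either way an embedding of K yields one of M, and symmetrically. *)

From HB Require Import structures.
From mathcomp Require Import all_boot all_order all_algebra.
From mathcomp Require Import all_classical all_reals all_analysis measurable_realfun.
Set Implicit Arguments.
Unset Strict Implicit.
Unset Printing Implicit Defensive.

Import Order.TTheory GRing.Theory Num.Theory.
Local Open Scope classical_set_scope.
Local Open Scope ring_scope.

Section interval_0T.
Variable R : realType.
Local Notation mu := (@lebesgue_measure R).

Lemma itv0T_fin (t : R) : itv0T t%:E = `]0, t[%classic.
Proof.
apply/seteqP; split => x /=; rewrite in_itv /=.
  by case=> x0 xt; rewrite x0 -lte_fin.
by case/andP=> x0 xt; split; rewrite ?lte_fin.
Qed.

Lemma itv0T_ninfty : itv0T (-oo%E : \bar R) = set0.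
Proof. by apply/seteqP; split => x // -[_ /=]; rewrite ltNge leNye. Qed.

Lemma measurable_itv0T (T : \bar R) : measurable (itv0T T).
Proof.
case: T => [t||]; last by rewrite itv0T_ninfty.
- by rewrite itv0T_fin; exact: measurable_itv.
- have -> : itv0T +oo%E = `]0, +oo[%classic :> set R.
    apply/seteqP; split => x /=; rewrite in_itv /= andbT; first by case.
    by split; rewrite ?ltry.
  exact: measurable_itv.
Qed.

Lemma itv0T_finite_measure (T : \bar R) : T != +oo%E -> (mu (itv0T T) < +oo)%E.
Proof.
case: T => [t _|//|_]; last by rewrite itv0T_ninfty measure0.
by rewrite itv0T_fin lebesgue_measure_itv /=; case: ifP => _; rewrite ?ltry.
Qed.

End interval_0T.

Definition nneg_mfun {R : realType} (T : \bar R) (f : R -> \bar R) : Prop :=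
  measurable_fun (itv0T T) f /\ forall x, (0 <= f x)%E.

Section nneg_mfun.
Context {R : realType} (T : \bar R).

Lemma nneg_mfun_cst (c : R) : 0 <= c -> nneg_mfun T (fun _ => c%:E).
Proof. by move=> c0; split; [exact: measurable_cst | move=> _; rewrite lee_fin]. Qed.

Lemma nneg_mfun_abs (f : R -> \bar R) :
  measurable_fun (itv0T T) f -> nneg_mfun T (fun x => `|f x|%E).
Proof. by move=> mf; split => //; exact: measurableT_comp mf. Qed.

Lemma nneg_mfunD (f g : R -> \bar R) :
  nneg_mfun T f -> nneg_mfun T g -> nneg_mfun T (fun x => f x + g x)%E.
Proof.
move=> [mf f0] [mg g0]; split; first exact: emeasurable_funD.
by move=> x; exact: adde_ge0.
Qed.

Lemma nneg_mfunZ (a : R) (f : R -> \bar R) :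
  0 <= a -> nneg_mfun T f -> nneg_mfun T (fun x => a%:E * f x)%E.
Proof.
move=> a0 [mf f0]; split; first exact: emeasurable_funM.
by move=> x; apply: mule_ge0; rewrite ?lee_fin.
Qed.

Lemma nneg_mfun_indic : nneg_mfun T (fun x => (\1_(itv0T T) x)%:E).
Proof.
split; last by move=> x; rewrite lee_fin.
by apply/measurable_EFinP; apply: measurable_indic; exact: measurable_itv0T.
Qed.

End nneg_mfun.

Section BF_norm_theory.
Variables (R : realType) (T : \bar R) (rhoX : (R -> \bar R) -> \bar R).
Hypothesis BF : BF_norm T rhoX.

Lemma BF_norm_ge0 f : nneg_mfun T f -> (0 <= rhoX f)%E.
Proof. by case: BF => P1 _; exact: P1. Qed.

Lemma BF_normZ (a : R) f : nneg_mfun T f -> 0 <= a ->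
  rhoX (fun x => a%:E * f x)%E = (a%:E * rhoX f)%E.
Proof. by case: BF => _ [_ [PZ _]]; exact: PZ. Qed.

Lemma BF_normD f g : nneg_mfun T f -> nneg_mfun T g ->
  (rhoX (fun x => f x + g x) <= rhoX f + rhoX g)%E.
Proof. by case: BF => _ [_ [_ [PD _]]]; exact: PD. Qed.

Lemma BF_norm_le f g : nneg_mfun T f -> nneg_mfun T g ->
  (forall x, itv0T T x -> (g x <= f x)%E) -> (rhoX g <= rhoX f)%E.
Proof.
case: BF => _ [_ [_ [_ [P2 _]]]] nf ng gf; apply: P2 => //.
by apply: (negligibleS _ (negligible_set0 _)) => x [Dx]; move/(_ (gf x Dx)).
Qed.

Lemma BF_norm0 : rhoX (fun _ => 0%:E) = 0%E.
Proof.
have := BF_normZ (nneg_mfun_cst T (lexx 0)) (lexx 0).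
by under eq_fun do rewrite mul0e; rewrite mul0e.
Qed.

Lemma BF_norm_indic_fin_num :
  T != +oo%E -> rhoX (fun x => (\1_(itv0T T) x)%:E) \is a fin_num.
Proof.
case: BF => _ [_ [_ [_ [_ [_ [P4 _]]]]]] Tfin.
rewrite ge0_fin_numE; last exact/BF_norm_ge0/nneg_mfun_indic.
exact: P4 (measurable_itv0T T) (@subset_refl _ _) (itv0T_finite_measure Tfin).
Qed.

(* (P4) controls constants only on finite intervals; for T = +oo the covering
   constant C1 is 0. *)
Lemma BF_norm_cst_le : exists r : R, 0 <= r /\
  forall c : R, 0 <= c -> (T = +oo%E -> c = 0) ->
    (rhoX (fun _ => c%:E) <= (c * r)%:E)%E.
Proof.
have [->|Tfin] := eqVneq T +oo%E.
  by exists 0; split => // c _ /(_ erefl) ->; rewrite BF_norm0 mul0r.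
pose one : R -> \bar R := fun x => (\1_(itv0T T) x)%:E.
have one_fin := BF_norm_indic_fin_num Tfin.
exists (fine (rhoX one)); split; first by apply/fine_ge0/BF_norm_ge0/nneg_mfun_indic.
move=> c c0 _; rewrite EFinM fineK // -BF_normZ //; last exact: nneg_mfun_indic.
apply: BF_norm_le; [exact: nneg_mfunZ (nneg_mfun_indic T) | exact: nneg_mfun_cst |].
by move=> x Dx; rewrite /one indicE mem_set // mule1.
Qed.

Lemma embeds_covered (K M : set (R -> \bar R)) (rhoK rhoM : (R -> \bar R) -> R) :
  in_ImT T M rhoM -> covered T M rhoM K rhoK ->
  embeds T K rhoK rhoX -> embeds T M rhoM rhoX.
Proof.
move=> [Mnn rhoM_ge0 _ _] [C0 [C1 [C0_gt0 C1_ge0 C1oo cov]]].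
move=> [Kemb [CK [CK_gt0 KC]]].
have [r [r_ge0 cst_le]] := BF_norm_cst_le.
pose C := CK * C0 + C1 * r.
have bound h1 : M h1 -> (rhoX (fun x => `|h1 x|%E) <= (C * rhoM h1)%:E)%E.
  move=> Mh1; have [h2 [Kh2 rhoK_h2 h1_le]] := cov h1 Mh1.
  have [mh1 h1_ge0] := Mnn h1 Mh1.
  have c_ge0 : 0 <= C1 * rhoM h1 by rewrite mulr_ge0 // rhoM_ge0.
  have nn_h2 := nneg_mfun_abs (proj1 (Kemb h2 Kh2)).
  have nn_c := nneg_mfun_cst T c_ge0.
  apply: (@le_trans _ _ (rhoX (fun x => `|h2 x| + (C1 * rhoM h1)%:E)%E)).
    apply: BF_norm_le; [exact: nneg_mfunD | exact: nneg_mfun_abs |].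
    move=> x Dx; rewrite gee0_abs; last exact: h1_ge0.
    by apply: (le_trans (h1_le x Dx)); rewrite leeD2r // lee_abs.
  apply: (le_trans (BF_normD nn_h2 nn_c)).
  have c_oo : T = +oo%E -> C1 * rhoM h1 = 0 by move/C1oo ->; rewrite mul0r.
  apply: (le_trans (leeD (KC h2 Kh2) (cst_le _ c_ge0 c_oo))).
  by rewrite -EFinD lee_fin /C mulrDl mulrAC lerD2r -mulrA ler_pM2l.
split=> [h1 Mh1|].
  by split; [exact: (Mnn h1 Mh1).1 | exact: le_lt_trans (bound h1 Mh1) (ltry _)].
exists C; split=> //.
by rewrite /C -(addr0 0) ltr_leD ?mulr_gt0 ?mulr_ge0.
Qed.

End BF_norm_theory.

Theorem corollary4p1 (R : realType) (T : \bar R)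
  (K : set (R -> \bar R)) (rhoK : (R -> \bar R) -> R)
  (M : set (R -> \bar R)) (rhoM : (R -> \bar R) -> R) :
  (0 < T)%E ->
  in_ImT T K rhoK -> in_ImT T M rhoM ->
  equiv_cone T M rhoM K rhoK ->
  forall rhoX : (R -> \bar R) -> \bar R, BF_norm T rhoX ->
    (embeds T K rhoK rhoX <-> embeds T M rhoM rhoX).
Proof.
move=> _ IK IM [MK KM] rhoX BF.
by split; apply: embeds_covered.
Qed.
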